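(* Let $S\in\mathbb{R}^{n\times n}$, $n=2m$, be nonsingular and skew-symmetric with eigenvalues $\pm\mathrm{i}\sigma_j$, where $\sigma_1=\cdots=\sigma_r>\sigma_{r+1}\ge\cdots\ge\sigma_m>0$ for some $1\le r<m$, and let $u_j,v_j$ be as follows: $\{u_1,\ldots,u_m,v_1,\ldots,v_m\}$ is an orthonormal basis of $\mathbb{R}^n$ with $Sv_j=\sigma_ju_j$, $Su_j=-\sigma_jv_j$. Let $q_0=2\sum_{i=1}^m(\alpha_{i,1}u_i-\alpha_{i,2}v_i)$ be a real unit vector with $\sum_{i=1}^r(\alpha_{i,1}^2+\alpha_{i,2}^2)>0$, and let $q_{2k+1}=Sq_{2k}/\|Sq_{2k}\|$, $q_{2k+2}=-Sq_{2k+1}/\|Sq_{2k+1}\|$. Let $x_e$ and $x_o$ be the unit vectors obtained by normalizing $\sum_{i=1}^r(\alpha_{i,1}u_i-\alpha_{i,2}v_i)$ and $\sum_{i=1}^r(-\alpha_{i,1}v_i-\alpha_{i,2}u_i)$, respectively. Then $q_{2k}\to x_e$ and $q_{2k-1}\to x_o$ as $k\to\infty$; $x_o\perp x_e$; $Sx_o=-\sigma_1x_e$ and $Sx_e=\sigma_1x_o$, so $\frac{\sqrt2}{2}(x_o\pm\mathrm{i}x_e)$ are unit eigenvectors of $S$ for $\pm\mathrm{i}\sigma_1$. Moreover, $|\tan\angle(q_{2k},x_e)|\le(\sigma_{r+1}/\sigma_1)^{2k}|\tan\angle(q_0,x_e)|$ and $|\tan\angle(q_{2k-1},x_o)|\le(\sigma_{r+1}/\sigma_1)^{2(k-1)}|\tan\angle(Sq_0,x_o)|$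 for all $k\ge1$.
   Context: $\|\cdot\|$ is the Euclidean norm; $\angle(x,y)$ is the acute angle between real vectors $x,y$, with $\cos\angle(x,y)=|x^Ty|/(\|x\|\|y\|)$. *)

From HB Require Import structures.
From mathcomp Require Import all_boot all_order all_algebra.
From mathcomp Require Import all_classical all_reals all_analysis.
From mathcomp Require Import complex.
Set Implicit Arguments. Unset Strict Implicit. Unset Printing Implicit Defensive.
Import Order.TTheory GRing.Theory Num.Theory.
Local Open Scope ring_scope.

Definition dotv (R : realType) (n : nat) (x y : 'cV[R]_n) : R := (x^T *m y) 0 0.
Definition enorm (R : realType) (n : nat) (x : 'cV[R]_n) : R := Num.sqrt (dotv x x).
Definition normalize (R : realType) (n : nat) (x : 'cV[R]_n) : 'cV[R]_n :=
  (enorm x)^-1 *: x.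

Definition angle (R : realType) (n : nat) (x y : 'cV[R]_n) : R :=
  acos (`|dotv x y| / (enorm x * enorm y)).

(* q_0 = q0, q_{2k+1} = S q_{2k}/||S q_{2k}||, q_{2k+2} = - S q_{2k+1}/||S q_{2k+1}|| *)
Fixpoint qseq (R : realType) (n : nat) (S : 'M[R]_n) (q0 : 'cV[R]_n) (k : nat)
  : 'cV[R]_n :=
  match k with
  | 0%N => q0
  | k'.+1 => ((-1) ^+ k' / enorm (S *m qseq S q0 k')) *: (S *m qseq S q0 k')
  end.

Definition cplxv (R : realType) (n : nat) (x y : 'cV[R]_n) : 'cV[R[i]]_n :=
  \col_j (x j 0 +i* y j 0)%C.
Definition cnorm2 (R : realType) (n : nat) (w : 'cV[R[i]]_n) : R[i] :=
  \sum_j `|w j 0| ^+ 2.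

(* In the orthonormal basis u, v the matrix S acts coordinatewise: it sends the
   coefficient pair (f_i, g_i) of u_i, -v_i to sigma_i (-g_i, f_i).  Hence, up to
   normalization, q_2k has coefficients sigma_i^2k (alpha_i1, alpha_i2), and q_2k+1 is
   the same with q_0 replaced by S q_0.  Split such a vector into its part on the
   leading block i <= r, where sigma_i = sigma_1, and the orthogonal remainder: the
   tangent of its angle with the leading part is the square root of the ratio of the
   two squared masses, and applying S^2k multiplies it by at most
   (sigma_r+1 / sigma_1)^2k.  The normalized leading part is fixed by the two-step
   iteration, and S rotates it into its partner with ratio sigma_1. *)

From HB Require Import structures.
From mathcomp Require Import all_boot all_order all_algebra.
From mathcomp Require Import all_classical all_reals all_analysis.
From mathcomp Require Import complex.
From mathcomp Require Import ring lra.
Import Order.TTheory GRing.Theory Num.Theory numFieldNormedType.Exports.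
Local Open Scope classical_set_scope.
Local Open Scope ring_scope.
Set Implicit Arguments. Unset Strict Implicit. Unset Printing Implicit Defensive.

Section Euclidean.
Variables (R : realType) (n : nat).
Implicit Types (x y z : 'cV[R]_n) (a b : R).

Lemma dotvE x y : dotv x y = \sum_j x j 0 * y j 0.
Proof. by rewrite /dotv !mxE; apply: eq_bigr => j _; rewrite mxE. Qed.

Lemma dotvC x y : dotv x y = dotv y x.
Proof. by rewrite !dotvE; apply: eq_bigr => j _; rewrite mulrC. Qed.

Lemma dotvDl x y z : dotv (x + y) z = dotv x z + dotv y z.
Proof. by rewrite !dotvE -big_split; apply: eq_bigr => j _; rewrite mxE mulrDl. Qed.

Lemma dotvZl a x y : dotv (a *: x) y = a * dotv x y.
Proof. by rewrite !dotvE mulr_sumr; apply: eq_bigr => j _; rewrite mxE mulrA. Qed.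

Lemma dotvBl x y z : dotv (x - y) z = dotv x z - dotv y z.
Proof. by rewrite dotvDl -scaleN1r dotvZl mulN1r. Qed.

Lemma dotvZr a x y : dotv x (a *: y) = a * dotv x y.
Proof. by rewrite !(dotvC x) dotvZl. Qed.

Lemma dotvBr x y z : dotv x (y - z) = dotv x y - dotv x z.
Proof. by rewrite !(dotvC x) dotvBl. Qed.

Lemma dotv_suml (I : finType) (F : I -> 'cV[R]_n) y :
  dotv (\sum_i F i) y = \sum_i dotv (F i) y.
Proof.
elim/big_rec2: _ => [|i a' b' _ <-]; last by rewrite dotvDl.
by rewrite dotvE big1 // => j _; rewrite mxE mul0r.
Qed.

Lemma dotv_sumr (I : finType) (F : I -> 'cV[R]_n) x :
  dotv x (\sum_i F i) = \sum_i dotv x (F i).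
Proof. by rewrite dotvC dotv_suml; apply: eq_bigr => i _; exact: dotvC. Qed.

Lemma dotvv_ge0 x : 0 <= dotv x x.
Proof. by rewrite dotvE sumr_ge0 // => j _; rewrite -expr2 sqr_ge0. Qed.

Lemma dotvv_eq0 x : dotv x x = 0 -> x = 0.
Proof.
rewrite dotvE => /eqP; rewrite psumr_eq0 => [/allP x0|j _]; last first.
  by rewrite -expr2 sqr_ge0.
apply/matrixP => i j; rewrite (ord1 j) mxE.
by have := x0 i (mem_index_enum _); rewrite -expr2 sqrf_eq0 => /eqP.
Qed.

Lemma enorm_ge0 x : 0 <= enorm x.
Proof. exact: sqrtr_ge0. Qed.

Lemma sqr_enorm x : enorm x ^+ 2 = dotv x x.
Proof. by rewrite /enorm sqr_sqrtr // dotvv_ge0. Qed.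

Lemma enormZ a x : enorm (a *: x) = `|a| * enorm x.
Proof.
by rewrite /enorm dotvZl dotvZr mulrA -expr2 sqrtrM ?sqr_ge0 // sqrtr_sqr.
Qed.

Lemma enorm_eq0 x : enorm x = 0 -> x = 0.
Proof. by move=> x0; apply: dotvv_eq0; rewrite -sqr_enorm x0 expr0n. Qed.

Lemma normalizeZ a x : 0 < a -> normalize (a *: x) = normalize x.
Proof.
move=> a0; rewrite /normalize enormZ gtr0_norm // scalerA invfM mulrAC.
by rewrite mulVf ?mul1r // gt_eqF.
Qed.

Lemma normalizeN x : normalize (- x) = - normalize x.
Proof.
by rewrite -scaleN1r /normalize enormZ normrN1 mul1r scalerA mulrN1 scaleNr.
Qed.

Lemma enorm_normalize x : 0 < enorm x -> enorm (normalize x) = 1.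
Proof.
by move=> x0; rewrite /normalize enormZ gtr0_norm ?invr_gt0 // mulVf ?gt_eqF.
Qed.

Lemma normalize_mulmx (A : 'M[R]_n) x :
  normalize (A *m normalize x) = normalize (A *m x).
Proof.
have [/enorm_eq0 ->|x0] := eqVneq (enorm x) 0; first by rewrite /normalize !scaler0.
by rewrite [normalize x]/normalize -scalemxAr normalizeZ // invr_gt0 lt_def x0 enorm_ge0.
Qed.

Lemma angleZ a b x y : 0 < a -> 0 < b -> angle (a *: x) (b *: y) = angle x y.
Proof.
move=> a0 b0; rewrite /angle dotvZl dotvZr !enormZ !normrM (gtr0_norm a0) (gtr0_norm b0).
congr acos; rewrite mulrA [a * enorm x * _]mulrACA invfM mulrACA mulfV ?mul1r //.
by rewrite mulf_neq0 // gt_eqF.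
Qed.

Section OrthogonalSplitting.
(* [x] splits as [y] plus a vector orthogonal to [y] of squared length [B]. *)
Variables (x y : 'cV[R]_n) (A B : R).
Hypotheses (A_gt0 : 0 < A) (B_ge0 : 0 <= B).
Hypotheses (dotvxx : dotv x x = A + B) (dotvyy : dotv y y = A) (dotvxy : dotv x y = A).

Let c := A / (Num.sqrt (A + B) * Num.sqrt A).

Let AB_gt0 : 0 < A + B. Proof. exact: ltr_wpDr. Qed.

Let cos_angle : `|dotv x y| / (enorm x * enorm y) = c.
Proof. by rewrite /enorm dotvxx dotvyy dotvxy ger0_norm // ltW. Qed.

Let c_gt0 : 0 < c.
Proof. by rewrite divr_gt0 // mulr_gt0 // sqrtr_gt0. Qed.

Let sqr_c : c ^+ 2 = A / (A + B).
Proof.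
rewrite /c expr_div_n exprMn !sqr_sqrtr ?ltW //.
by field; rewrite !gt_eqF.
Qed.

Let sqr_sin : 1 - c ^+ 2 = B / (A + B).
Proof. by rewrite sqr_c; field; rewrite gt_eqF. Qed.

Let c_le1 : c <= 1.
Proof.
rewrite -(ler_pXn2r (n := 2)) ?qualifE /= ?(ltW c_gt0) // expr1n sqr_c.
by rewrite ler_pdivrMr // mul1r lerDl.
Qed.

Lemma tan_angle_split : tan (angle x y) = Num.sqrt (B / A).
Proof.
have c_itv : -1 <= c <= 1 by rewrite c_le1 andbT (le_trans _ (ltW c_gt0)) // lerN10.
rewrite /angle cos_angle /tan sin_acos // acosK ?in_itv //.
apply/eqP; rewrite -(eqrXn2 (n := 2)) ?divr_ge0 ?sqrtr_ge0 ?(ltW c_gt0) ?(ltW A_gt0) //.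
rewrite expr_div_n sqr_sin sqr_c !sqr_sqrtr ?divr_ge0 ?(ltW A_gt0) ?(ltW AB_gt0) //.
by apply/eqP; field; rewrite !gt_eqF.
Qed.

Lemma enorm_normalize_split :
  enorm (normalize x - normalize y) <= Num.sqrt 2 * Num.sqrt (B / A).
Proof.
have x_gt0 : 0 < enorm x by rewrite /enorm dotvxx sqrtr_gt0.
have y_gt0 : 0 < enorm y by rewrite /enorm dotvyy sqrtr_gt0.
have dotv_normalize : dotv (normalize x) (normalize y) = c.
  by rewrite /normalize dotvZl dotvZr dotvxy /enorm dotvxx dotvyy /c invfM; ring.
(* |x^ - y^|^2 = 2 (1 - cos) <= 2 sin^2 <= 2 tan^2 *)
rewrite -(ler_pXn2r (n := 2)) ?qualifE /= ?enorm_ge0 ?mulr_ge0 ?sqrtr_ge0 //.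
rewrite sqr_enorm dotvBl !dotvBr -!sqr_enorm !enorm_normalize // (dotvC (normalize y)).
rewrite dotv_normalize exprMn !sqr_sqrtr ?divr_ge0 ?(ltW A_gt0) // expr1n.
have : B / (A + B) <= B / A by rewrite ler_wpM2l // lef_pV2 ?posrE // lerDl.
rewrite -sqr_sin; have : c ^+ 2 <= c by rewrite expr2 ger_pMl.
by lra.
Qed.

End OrthogonalSplitting.
End Euclidean.

Section SpectralCoordinates.
(* Indices are 0-based: [sigma 0] is the paper's sigma_1 and [sigma r] its sigma_r+1. *)
Variables (R : realType) (m n r : nat) (S : 'M[R]_n) (sigma : nat -> R)
  (u v : nat -> 'cV[R]_n).
Hypothesis Hrm : (r < m)%N.
Hypothesis Hsig_eq : forall j, (j < r)%N -> sigma j = sigma 0%N.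
Hypothesis Hsig_gap : sigma r < sigma 0%N.
Hypothesis Hsig_mono : forall i j, (i <= j)%N -> (j < m)%N -> sigma j <= sigma i.
Hypothesis Hsig_pos : forall j, (j < m)%N -> 0 < sigma j.
Hypothesis Huu : forall i j, (i < m)%N -> (j < m)%N -> dotv (u i) (u j) = (i == j)%:R.
Hypothesis Hvv : forall i j, (i < m)%N -> (j < m)%N -> dotv (v i) (v j) = (i == j)%:R.
Hypothesis Huv : forall i j, (i < m)%N -> (j < m)%N -> dotv (u i) (v j) = 0.
Hypothesis HSv : forall j, (j < m)%N -> S *m v j = sigma j *: u j.
Hypothesis HSu : forall j, (j < m)%N -> S *m u j = - (sigma j *: v j).

Implicit Types (f g : nat -> R).

Definition coordv f g : 'cV[R]_n := \sum_(i < m) (f i *: u i - g i *: v i).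
Definition lead f : nat -> R := fun i => if (i < r)%N then f i else 0.
Definition lead_mass f g : R := \sum_(i < m | (i < r)%N) (f i ^+ 2 + g i ^+ 2).
Definition tail_mass f g : R := \sum_(i < m | ~~ (i < r)%N) (f i ^+ 2 + g i ^+ 2).
Definition sigma_pow k f : nat -> R := fun i => sigma i ^+ k * f i.

Lemma eq_coordv f g f' g' : (forall i, (i < m)%N -> f i = f' i) ->
  (forall i, (i < m)%N -> g i = g' i) -> coordv f g = coordv f' g'.
Proof. by move=> ff' gg'; apply: eq_bigr => i _; rewrite ff' // gg'. Qed.

Lemma coordvZ c f g : coordv (fun i => c * f i) (fun i => c * g i) = c *: coordv f g.
Proof. by rewrite scaler_sumr; apply: eq_bigr => i _; rewrite scalerBr !scalerA. Qed.

Lemma coordv_lead f g :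
  \sum_(i < m | (i < r)%N) (f i *: u i - g i *: v i) = coordv (lead f) (lead g).
Proof.
by rewrite big_mkcond; apply: eq_bigr => i _; rewrite /lead; case: ifP; rewrite ?scale0r ?subr0.
Qed.

Lemma dotv_coordv f g f' g' :
  dotv (coordv f g) (coordv f' g') = \sum_(i < m) (f i * f' i + g i * g' i).
Proof.
rewrite dotv_suml; apply: eq_bigr => i _; rewrite dotv_sumr.
under eq_bigr => j _ do
  rewrite dotvBl !dotvBr !dotvZl !dotvZr Huu // Hvv // Huv // (dotvC (v i)) Huv //.
rewrite (bigD1 i) //= big1 ?addr0 => [|j ji]; first by rewrite eqxx /=; ring.
by rewrite (negbTE (_ : (i : nat) != j)) /=; [ring | rewrite eq_sym].
Qed.

Lemma mul_coordv f g :
  S *m coordv f g = coordv (sigma_pow 1 (fun i => - g i)) (sigma_pow 1 f).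
Proof.
rewrite mulmx_sumr; apply: eq_bigr => i _.
rewrite mulmxBr -!scalemxAr HSu // HSv // /sigma_pow !expr1 scalerN !scalerA.
by rewrite mulrN scaleNr addrC [g i * _]mulrC [f i * _]mulrC.
Qed.

Lemma dotvv_coordv f g :
  dotv (coordv f g) (coordv f g) = lead_mass f g + tail_mass f g.
Proof.
rewrite dotv_coordv (bigID (fun i : 'I_m => (i < r)%N)) /=.
by congr (_ + _); apply: eq_bigr => i _; rewrite !expr2.
Qed.

Lemma dotv_coordv_lead f g :
  dotv (coordv f g) (coordv (lead f) (lead g)) = lead_mass f g.
Proof.
rewrite dotv_coordv /lead_mass [RHS]big_mkcond; apply: eq_bigr => i _.
by rewrite /lead; case: ifP; rewrite ?mulr0 ?addr0 // !expr2.
Qed.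

Lemma dotvv_coordv_lead f g :
  dotv (coordv (lead f) (lead g)) (coordv (lead f) (lead g)) = lead_mass f g.
Proof.
rewrite dotv_coordv /lead_mass [RHS]big_mkcond; apply: eq_bigr => i _.
by rewrite /lead; case: ifP; rewrite ?mulr0 ?addr0 // !expr2.
Qed.

Lemma tail_mass_ge0 f g : 0 <= tail_mass f g.
Proof. by apply: sumr_ge0 => i _; rewrite addr_ge0 // sqr_ge0. Qed.

Lemma lead_mass_rot f g : lead_mass (fun i => - g i) f = lead_mass f g.
Proof. by apply: eq_bigr => i _; rewrite sqrrN addrC. Qed.

Lemma enorm_coordv_gt0 f g : 0 < lead_mass f g -> 0 < enorm (coordv f g).
Proof.
by move=> A0; rewrite /enorm dotvv_coordv sqrtr_gt0 ltr_wpDr // tail_mass_ge0.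
Qed.

Lemma enorm_coordv_lead_gt0 f g :
  0 < lead_mass f g -> 0 < enorm (coordv (lead f) (lead g)).
Proof. by move=> A0; rewrite /enorm dotvv_coordv_lead sqrtr_gt0. Qed.

Lemma tan_angle_coordv f g : 0 < lead_mass f g ->
  tan (angle (coordv f g) (coordv (lead f) (lead g)))
  = Num.sqrt (tail_mass f g / lead_mass f g).
Proof.
move=> A0; apply: tan_angle_split => //.
- exact: tail_mass_ge0.
- exact: dotvv_coordv.
- exact: dotvv_coordv_lead.
- exact: dotv_coordv_lead.
Qed.

Lemma enorm_normalize_coordvB_le f g : 0 < lead_mass f g ->
  enorm (normalize (coordv f g) - normalize (coordv (lead f) (lead g)))
  <= Num.sqrt 2 * Num.sqrt (tail_mass f g / lead_mass f g).
Proof.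
move=> A0; apply: enorm_normalize_split => //.
- exact: tail_mass_ge0.
- exact: dotvv_coordv.
- exact: dotvv_coordv_lead.
- exact: dotv_coordv_lead.
Qed.

Lemma sigma0_gt0 : 0 < sigma 0%N.
Proof. by apply: Hsig_pos; apply: leq_ltn_trans Hrm. Qed.

Lemma lead_mass_sigma_pow k f g :
  lead_mass (sigma_pow k f) (sigma_pow k g) = (sigma 0%N ^+ k) ^+ 2 * lead_mass f g.
Proof.
rewrite /lead_mass mulr_sumr; apply: eq_bigr => i ir.
by rewrite /sigma_pow Hsig_eq // !exprMn mulrDr.
Qed.

Lemma lead_mass_sigma_pow_gt0 k f g :
  0 < lead_mass f g -> 0 < lead_mass (sigma_pow k f) (sigma_pow k g).
Proof. by move=> A0; rewrite lead_mass_sigma_pow mulr_gt0 // !exprn_gt0 // sigma0_gt0. Qed.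

Lemma tail_mass_sigma_pow_le k f g :
  tail_mass (sigma_pow k f) (sigma_pow k g) <= (sigma r ^+ k) ^+ 2 * tail_mass f g.
Proof.
rewrite /tail_mass mulr_sumr; apply: ler_sum => i ir.
rewrite /sigma_pow !exprMn -mulrDr; apply: ler_wpM2r; first by rewrite addr_ge0 // sqr_ge0.
have sigma_i_ge0 : 0 <= sigma i by apply/ltW/Hsig_pos.
rewrite lerXn2r ?qualifE /= ?exprn_ge0 ?(ltW (Hsig_pos Hrm)) //.
by rewrite lerXn2r ?qualifE /= ?(ltW (Hsig_pos Hrm)) // Hsig_mono // leqNgt.
Qed.

Lemma coordv_lead_sigma_pow k f g :
  coordv (lead (sigma_pow k f)) (lead (sigma_pow k g))
  = sigma 0%N ^+ k *: coordv (lead f) (lead g).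
Proof.
by rewrite -coordvZ; apply: eq_coordv => i _; rewrite /lead /sigma_pow;
  case: ifP => ir; rewrite ?mulr0 // Hsig_eq.
Qed.

Lemma sqrt_mass_ratio_sigma_pow_le k f g : 0 < lead_mass f g ->
  Num.sqrt (tail_mass (sigma_pow k f) (sigma_pow k g)
            / lead_mass (sigma_pow k f) (sigma_pow k g))
  <= (sigma r / sigma 0%N) ^+ k * Num.sqrt (tail_mass f g / lead_mass f g).
Proof.
move=> A0; have s0 := sigma0_gt0; have sr := Hsig_pos Hrm.
have rho_ge0 : 0 <= (sigma r / sigma 0%N) ^+ k by rewrite exprn_ge0 // divr_ge0 // ltW.
rewrite -(ger0_norm rho_ge0) -sqrtr_sqr -sqrtrM ?sqr_ge0 // ler_sqrt; last first.
  by rewrite mulr_ge0 ?sqr_ge0 // divr_ge0 ?tail_mass_ge0 // ltW.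
have -> : ((sigma r / sigma 0%N) ^+ k) ^+ 2 * (tail_mass f g / lead_mass f g)
   = ((sigma r ^+ k) ^+ 2 * tail_mass f g) / ((sigma 0%N ^+ k) ^+ 2 * lead_mass f g).
  by rewrite !expr_div_n; field; rewrite !expf_neq0 // gt_eqF.
rewrite lead_mass_sigma_pow ler_pM2r ?tail_mass_sigma_pow_le //.
by rewrite invr_gt0 mulr_gt0 // !exprn_gt0.
Qed.

Lemma tan_angle_sigma_pow_le k f g c : 0 < lead_mass f g -> 0 < c ->
  `|tan (angle (normalize (coordv (sigma_pow k f) (sigma_pow k g)))
               (normalize (coordv (lead f) (lead g))))|
  <= (sigma r / sigma 0%N) ^+ k
     * `|tan (angle (c *: coordv f g) (normalize (coordv (lead f) (lead g))))|.
Proof.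
move=> A0 c0; have Ak := lead_mass_sigma_pow_gt0 k A0.
have lead_k : coordv (lead f) (lead g)
    = (sigma 0%N ^+ k)^-1 *: coordv (lead (sigma_pow k f)) (lead (sigma_pow k g)).
  by rewrite coordv_lead_sigma_pow scalerA mulVf ?scale1r // expf_neq0 // gt_eqF // sigma0_gt0.
have angle_k : angle (normalize (coordv (sigma_pow k f) (sigma_pow k g)))
                     (normalize (coordv (lead f) (lead g)))
    = angle (coordv (sigma_pow k f) (sigma_pow k g))
            (coordv (lead (sigma_pow k f)) (lead (sigma_pow k g))).
  rewrite /normalize {2}lead_k scalerA angleZ ?invr_gt0 ?enorm_coordv_gt0 //.
  by rewrite mulr_gt0 ?invr_gt0 ?exprn_gt0 ?sigma0_gt0 ?enorm_coordv_lead_gt0.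
rewrite angle_k /normalize angleZ ?invr_gt0 ?enorm_coordv_lead_gt0 //.
rewrite !tan_angle_coordv // !ger0_norm ?sqrtr_ge0 //.
exact: sqrt_mass_ratio_sigma_pow_le.
Qed.

Lemma cvg_normalize_sigma_pow2 f g : 0 < lead_mass f g ->
  (fun k => enorm (normalize (coordv (sigma_pow k.*2 f) (sigma_pow k.*2 g))
                   - normalize (coordv (lead f) (lead g)))) @ \oo --> (0 : R).
Proof.
move=> A0; set rho := sigma r / sigma 0%N.
have rho_gt0 : 0 < rho by rewrite divr_gt0 ?sigma0_gt0 ?Hsig_pos.
have rho2_lt1 : `|rho ^+ 2| < 1.
  by rewrite ger0_norm ?exprn_ge0 ?ltW // expr_lt1 ?ltW // ltr_pdivrMr ?sigma0_gt0 // mul1r.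
set C := Num.sqrt 2 * Num.sqrt (tail_mass f g / lead_mass f g).
apply: (squeeze_cvgr _ (cvg_cst 0) (cvg_geometric C rho2_lt1)).
apply: nearW => k; rewrite enorm_ge0 /=.
have lead_k : normalize (coordv (lead f) (lead g))
    = normalize (coordv (lead (sigma_pow k.*2 f)) (lead (sigma_pow k.*2 g))).
  by rewrite coordv_lead_sigma_pow normalizeZ // exprn_gt0 // sigma0_gt0.
rewrite lead_k; apply: le_trans (enorm_normalize_coordvB_le _) _.
  exact: lead_mass_sigma_pow_gt0.
rewrite /C -mulrA ler_pM2l ?sqrtr_gt0 // -exprM mul2n [leRHS]mulrC.
exact: sqrt_mass_ratio_sigma_pow_le.
Qed.

Lemma mul_coordv_sigma_pow k f g :
  S *m coordv (sigma_pow k f) (sigma_pow k g)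
  = coordv (sigma_pow k (sigma_pow 1 (fun i => - g i))) (sigma_pow k (sigma_pow 1 f)).
Proof. by rewrite mul_coordv; apply: eq_coordv => i _; rewrite /sigma_pow; ring. Qed.

Lemma qseq_coordv f g q0 : q0 = normalize (coordv f g) -> forall k,
  qseq S q0 k.*2 = normalize (coordv (sigma_pow k.*2 f) (sigma_pow k.*2 g)) /\
  qseq S q0 k.*2.+1 = normalize (coordv (sigma_pow k.*2 (sigma_pow 1 (fun i => - g i)))
                                        (sigma_pow k.*2 (sigma_pow 1 f))).
Proof.
move=> q0E.
have odd_step k : qseq S q0 k.*2.+1 = normalize (S *m qseq S q0 k.*2).
  by rewrite /= -signr_odd odd_double expr0 mul1r.
have even_step k : qseq S q0 k.+1.*2 = - normalize (S *m qseq S q0 k.*2.+1).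
  by rewrite doubleS /= -signr_odd /= odd_double expr1 mulNr mul1r scaleNr.
have even k : qseq S q0 k.*2 = normalize (coordv (sigma_pow k.*2 f) (sigma_pow k.*2 g)).
  elim: k => [|k IH].
    by rewrite q0E; congr normalize; apply: eq_coordv => i _; rewrite /sigma_pow mul1r.
  rewrite even_step odd_step IH (normalize_mulmx _ (coordv _ _)) normalize_mulmx.
  rewrite !mul_coordv_sigma_pow -normalizeN.
  congr normalize; rewrite -scaleN1r -coordvZ.
  by apply: eq_coordv => i _; rewrite /sigma_pow doubleS !exprS; ring.
by move=> k; rewrite odd_step even normalize_mulmx mul_coordv_sigma_pow.
Qed.

Lemma lead_eigenpair f g : 0 < lead_mass f g ->
  let x := normalize (coordv (lead f) (lead g)) in
  let y := normalize (coordv (lead (fun i => - g i)) (lead f)) in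
  [/\ S *m y = - (sigma 0%N *: x), S *m x = sigma 0%N *: y, dotv y x = 0,
      enorm x = 1 & enorm y = 1].
Proof.
move=> A0 x y.
have mul_lead f' g' : S *m coordv (lead f') (lead g')
    = sigma 0%N *: coordv (lead (fun i => - g' i)) (lead f').
  rewrite mul_coordv -coordvZ; apply: eq_coordv => i _; rewrite /sigma_pow /lead;
  by case: ifP => ir; rewrite expr1; [rewrite Hsig_eq // | ]; ring.
have enorm_rot : enorm (coordv (lead (fun i => - g i)) (lead f))
    = enorm (coordv (lead f) (lead g)).
  by rewrite /enorm !dotvv_coordv_lead lead_mass_rot.
have rot2 : coordv (lead (fun i => - f i)) (lead (fun i => - g i))
    = - coordv (lead f) (lead g).
  rewrite -scaleN1r -coordvZ; apply: eq_coordv => i _; rewrite /lead;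
  by case: ifP; rewrite ?mulr0 ?oppr0 // mulN1r.
have x_gt0 := enorm_coordv_lead_gt0 A0.
split.
- rewrite /y /x /normalize -scalemxAr mul_lead rot2 enorm_rot !scalerA.
  by rewrite scalerN [_^-1 * _]mulrC.
- by rewrite /y /x /normalize -scalemxAr mul_lead enorm_rot !scalerA mulrC.
- rewrite /y /x /normalize dotvZl dotvZr dotv_coordv big1 ?mulr0 // => i _.
  by rewrite /lead; case: ifP => _; ring.
- exact: enorm_normalize.
- by rewrite enorm_normalize // enorm_rot.
Qed.

Lemma power_iteration f g c q0 : 0 < lead_mass f g -> 0 < c ->
  q0 = c *: coordv f g -> enorm q0 = 1 ->
  let q := qseq S q0 in
  let xe := normalize (coordv (lead f) (lead g)) in
  let xo := normalize (coordv (lead (fun i => - g i)) (lead f)) in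
  let rho := sigma r / sigma 0%N in
  [/\ (fun k => enorm (q k.*2 - xe)) @ \oo --> (0 : R),
      (fun k => enorm (q k.*2.-1 - xo)) @ \oo --> (0 : R) &
      forall k, (1 <= k)%N ->
        `|tan (angle (q k.*2) xe)| <= rho ^+ k.*2 * `|tan (angle q0 xe)|
        /\ `|tan (angle (q k.*2.-1) xo)|
             <= rho ^+ (k.-1).*2 * `|tan (angle (S *m q0) xo)|].
Proof.
move=> A0 c0 q0E q0_unit q xe xo rho.
have q0N : q0 = normalize (coordv f g).
  by rewrite -(normalizeZ _ c0) -q0E /normalize q0_unit invr1 scale1r.
pose h1 := sigma_pow 1 (fun i => - g i); pose h2 := sigma_pow 1 f.
have Ah : 0 < lead_mass h1 h2 by rewrite lead_mass_sigma_pow_gt0 // lead_mass_rot.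
have xoE : xo = normalize (coordv (lead h1) (lead h2)).
  by rewrite coordv_lead_sigma_pow normalizeZ // expr1 sigma0_gt0.
have Sq0 : S *m q0 = c *: coordv h1 h2 by rewrite q0E -scalemxAr mul_coordv.
have [qe qo] := (fun k => (qseq_coordv q0N k).1, fun k => (qseq_coordv q0N k).2).
split.
- under eq_fun => k do rewrite /q qe.
  exact: cvg_normalize_sigma_pow2.
- rewrite -cvg_shiftS /=; under eq_fun => k do rewrite /q qo xoE.
  exact: cvg_normalize_sigma_pow2.
- case=> // k _; split; first by rewrite /q qe q0E; exact: tan_angle_sigma_pow_le.
  by rewrite /q -[k.+1.*2.-1]/(k.*2.+1) qo xoE Sq0; exact: tan_angle_sigma_pow_le.
Qed.

End SpectralCoordinates.

Section ComplexEigenvector.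
Variables (R : realType) (n : nat).
Local Open Scope complex_scope.

Lemma sum_complex (I : finType) (F G : I -> R) :
  \sum_i (F i +i* G i) = (\sum_i F i) +i* (\sum_i G i).
Proof. by elim/big_rec3: _ => // i a b c _ ->. Qed.

Lemma map_mx_mul_cplxv (S : 'M[R]_n) (x y : 'cV[R]_n) :
  map_mx (fun a => a%:C) S *m cplxv x y = cplxv (S *m x) (S *m y).
Proof.
apply/matrixP => j k; rewrite !mxE (ord1 k) -sum_complex.
apply: eq_bigr => l _; rewrite !mxE /real_complex_def; simpc.
by congr (_ +i* _); ring.
Qed.

Lemma cplxv_eigenvector (S : 'M[R]_n) (x y : 'cV[R]_n) (s : R) :
  S *m x = - (s *: y) -> S *m y = s *: x -> enorm x = 1 -> enorm y = 1 ->
  forall b : bool,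
    let w := (Num.sqrt 2 / 2)%:C *: cplxv x ((-1) ^+ b *: y) in
    map_mx (fun a => a%:C) S *m w = ((-1) ^+ b * 'i * s%:C) *: w /\ cnorm2 w = 1.
Proof.
move=> Sx Sy x_unit y_unit b w; split.
  rewrite /w -scalemxAr map_mx_mul_cplxv -scalemxAr Sx Sy scalerA.
  apply/matrixP => j k; rewrite !mxE.
  by clear w; case: b; rewrite /= ?expr1 ?expr0 /real_complex_def; simpc; congr (_ +i* _); ring.
have sum_sqr z : enorm z = 1 -> \sum_j z j 0 ^+ 2 = 1.
  by move=> z_unit; rewrite -(expr1n _ 2) -z_unit sqr_enorm dotvE; under eq_bigr do rewrite expr2.
rewrite /cnorm2 (eq_bigr (fun j => (2^-1 * (x j 0 ^+ 2 + y j 0 ^+ 2)) +i* 0)).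
  rewrite sum_complex big1_eq -mulr_sumr big_split /= !sum_sqr //.
  by apply/eqP; rewrite eq_complex /= eqxx andbT; apply/eqP; field.
move=> j _; rewrite !mxE normc_def /real_complex_def; simpc => /=.
rewrite expr2; simpc; rewrite /=; congr (_ +i* _).
rewrite -expr2 sqr_sqrtr ?addr_ge0 ?sqr_ge0 //.
rewrite !exprMn sqr_sqrtr // -signr_odd sqrr_sign.
by field.
Qed.

End ComplexEigenvector.

Theorem mainTheorem6 (R : realType) (m n r : nat) (S : 'M[R]_n)
  (sigma alpha1 alpha2 : nat -> R) (u v : nat -> 'cV[R]_n)
  (Hn : n = (2 * m)%N)
  (Hskew : S^T = - S) (Hnonsing : S \in unitmx)
  (Heig : char_poly S = \prod_(j < m) ('X^2 + (sigma j ^+ 2)%:P))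
  (Hr1 : (1 <= r)%N) (Hrm : (r < m)%N)
  (Hsig_eq : forall j, (j < r)%N -> sigma j = sigma 0%N)
  (Hsig_gap : sigma r < sigma 0%N)
  (Hsig_mono : forall i j, (i <= j)%N -> (j < m)%N -> sigma j <= sigma i)
  (Hsig_pos : forall j, (j < m)%N -> 0 < sigma j)
  (Huu : forall i j, (i < m)%N -> (j < m)%N -> dotv (u i) (u j) = (i == j)%:R)
  (Hvv : forall i j, (i < m)%N -> (j < m)%N -> dotv (v i) (v j) = (i == j)%:R)
  (Huv : forall i j, (i < m)%N -> (j < m)%N -> dotv (u i) (v j) = 0)
  (HSv : forall j, (j < m)%N -> S *m v j = sigma j *: u j)
  (HSu : forall j, (j < m)%N -> S *m u j = - (sigma j *: v j))
  (q0 : 'cV[R]_n)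
  (Hq0 : q0 = 2 *: \sum_(i < m) (alpha1 i *: u i - alpha2 i *: v i))
  (Hq0unit : enorm q0 = 1)
  (Halpha : 0 < \sum_(i < m | (i < r)%N) (alpha1 i ^+ 2 + alpha2 i ^+ 2)) :
  let q := qseq S q0 in
  let xe := normalize (\sum_(i < m | (i < r)%N) (alpha1 i *: u i - alpha2 i *: v i)) in
  let xo := normalize (\sum_(i < m | (i < r)%N) (- (alpha1 i *: v i) - alpha2 i *: u i)) in
  let rho := sigma r / sigma 0%N in
  [/\ (fun k => enorm (q k.*2 - xe)) @ \oo --> (0 : R)
        /\ (fun k => enorm (q k.*2.-1 - xo)) @ \oo --> (0 : R),
      dotv xo xe = 0,
      S *m xo = - (sigma 0%N *: xe) /\ S *m xe = sigma 0%N *: xo,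
      (forall s : bool,
         let w := ((Num.sqrt 2 / 2)%:C)%C *: cplxv xo ((-1) ^+ s *: xe) in
         map_mx (fun a => (a%:C)%C) S *m w = ((-1) ^+ s * 'i%C * ((sigma 0%N)%:C)%C) *: w
         /\ cnorm2 w = 1) &
      forall k, (1 <= k)%N ->
        `|tan (angle (q k.*2) xe)| <= rho ^+ k.*2 * `|tan (angle q0 xe)|
        /\ `|tan (angle (q k.*2.-1) xo)|
             <= rho ^+ (k.-1).*2 * `|tan (angle (S *m q0) xo)|].
Proof.
move=> q xe xo rho.
have -> : xe = normalize (coordv m u v (lead r alpha1) (lead r alpha2)).
  by rewrite /xe coordv_lead.
have -> : xo = normalize (coordv m u v (lead r (fun i => - alpha2 i)) (lead r alpha1)).
  by rewrite /xo -coordv_lead; congr normalize; apply: eq_bigr => i _; rewrite scaleNr addrC.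
have [Sxo Sxe xo_xe xe_unit xo_unit] :=
  lead_eigenpair Hsig_eq Huu Hvv Huv HSv HSu Halpha.
have [cvg_even cvg_odd tan_le] := power_iteration Hrm Hsig_eq Hsig_gap Hsig_mono
  Hsig_pos Huu Hvv Huv HSv HSu Halpha (ltr0Sn _ 1) Hq0 Hq0unit.
by split=> //; exact: cplxv_eigenvector.
Qed.
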